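(* Let $q>0$ and let $\{|n_q\rangle\}_{n\ge0}$ be the orthonormal basis of $ML^2(\mathbb{C}\setminus\mathbb{R}_-;q)$ given by \[ |n_q\rangle(z)=\frac{z^{qn}}{\sqrt{\Gamma(qn+1)}}. \] Then: <ol> <li>Each $|n_q\rangle$ lies in the domain of $a^\dagger a$.</li> <li>We have \[ a^\dagger a|n_q\rangle=\begin{cases}\dfrac{\Gamma(qn+1)}{\Gamma(q(n-1)+1)}\,|n_q\rangle, & n\ge1,\\[2mm] 0, & n=0.\end{cases} \]</li> <li>The operator $a^\dagger a$, defined on the linear span of $\{|n_q\rangle\}$ by these relations, extends to a positive self-adjoint operator, again denoted $a^\dagger a$, on its maximal domain.</li> <li>If $f(z)=\sum_{n=0}^\infty a_n z^{qn}$ belongs to $ML^2(\mathbb{C}\setminus\mathbb{R}_-;q)$ and to the domain of $a^\dagger a$, then \[ (a^\dagger a f)(z)=\sum_{n=1}^\infty a_n\frac{\Gamma(qn+1)}{\Gamma(q(n-1)+1)}\,z^{qn}. \]</li> </ol>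
   Context: Fix $q>0$. The Mittag-Leffler space of the slitted plane is \[ ML^2(\mathbb{C}\setminus\mathbb{R}_-;q)=\Big\{f:\mathbb{C}\setminus\mathbb{R}_-\to\mathbb{C},\ f(z)=\sum_{n\ge0}a_nz^{qn}\ :\ \sum_{n\ge0}|a_n|^2\Gamma(qn+1)<\infty\Big\}, \] with the principal branch of $z^{qn}$ on $\mathbb{C}\setminus(-\infty,0]$. Its scalar product is \[ \langle f,g\rangle=\sum_{n\ge0}\overline{a_n}\,b_n\,\Gamma(qn+1) \] for $f=\sum a_nz^{qn}$ and $g=\sum b_nz^{qn}$. For $f=\sum a_n z^{qn}$, the Caputo fractional derivative of order $q$ is \[ D^q_*f(z)=\sum_{n\ge1}a_n\frac{\Gamma(qn+1)}{\Gamma(q(n-1)+1)}z^{q(n-1)}, \] defined whenever $\sum_{n\ge1}|a_n|^2\,\big|\Gamma(qn+1)/\Gamma(q(n-1)+1)\big|^2<\infty$. The creation and annihilation operators are defined as follows: <ul> <li>$a^\dagger f=z^q f$ on $\operatorname{Dom}(a^\dagger)=\{f\in ML^2(\mathbb{C}\setminus\mathbb{R}_-;q): z^qf\in ML^2(\mathbb{C}\setminus\mathbb{R}_-;q)\}$;</li> <li>$af=D^q_*f$ on $\operatorname{Dom}(a)=\{f\in ML^2(\mathbb{C}\setminus\mathbb{R}_-;q): D^q_*f\in ML^2(\mathbb{C}\setminus\mathbb{R}_-;q)\}$.</li> </ul> These are closed, densely defined and mutually adjoint. The operator $a^\dagger a$ is defined on $\{f\in\operatorname{Dom}(a): af\in\operatorname{Dom}(a^\dagger)\}$.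 *)

From Stdlib Require Import Reals.
From Coquelicot Require Import Coquelicot.
Open Scope R_scope.

Definition Gamma (x : R) : R :=
  RInt_gen (fun t => Rpower t (x - 1) * exp (- t))
           (at_right 0) (Rbar_locally p_infty).

Definition wq (q : R) (n : nat) : R := Gamma (q * INR n + 1).

(** An element f(z) = sum_n a_n z^(q n) of ML^2(C \ R_-; q) is represented by its
    coefficient sequence a : nat -> C. *)
Definition coeffs := nat -> C.

Definition inML2 (q : R) (a : coeffs) : Prop :=
  ex_series (fun n => (Cmod (a n)) ^ 2 * wq q n).

Definition ipML2 (q : R) (a b : coeffs) : C :=
  (Series (fun n => Re (Cmult (Cconj (a n)) (b n)) * wq q n),
   Series (fun n => Im (Cmult (Cconj (a n)) (b n)) * wq q n)).

Definition normML2 (q : R) (a : coeffs) : R :=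
  sqrt (Series (fun n => (Cmod (a n)) ^ 2 * wq q n)).

Definition ket (q : R) (n : nat) : coeffs :=
  fun m => if Nat.eqb m n then RtoC (/ sqrt (wq q n)) else RtoC 0.

Definition lam (q : R) (n : nat) : R := wq q n / wq q (n - 1).

(** Creation operator a^dagger f = z^q f: on coefficients, a shift. *)
Definition adag (a : coeffs) : coeffs :=
  fun n => match n with O => RtoC 0 | S m => a m end.
Definition dom_adag (q : R) (a : coeffs) : Prop :=
  inML2 q a /\ inML2 q (adag a).

(** Caputo derivative D^q_* : coefficient of z^(q(n-1)) is a_n Gamma(qn+1)/Gamma(q(n-1)+1). *)
Definition caputo (q : R) (a : coeffs) : coeffs :=
  fun n => Cmult (a (S n)) (RtoC (lam q (S n))).
Definition caputo_defined (q : R) (a : coeffs) : Prop :=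
  ex_series (fun n => (Cmod (a (S n))) ^ 2 * (Rabs (lam q (S n))) ^ 2).

(** Annihilation operator a f = D^q_* f. *)
Definition dom_a (q : R) (a : coeffs) : Prop :=
  inML2 q a /\ caputo_defined q a /\ inML2 q (caputo q a).

Definition dom_adag_a (q : R) (a : coeffs) : Prop :=
  dom_a q a /\ dom_adag q (caputo q a).
Definition adag_a (q : R) (a : coeffs) : coeffs := adag (caputo q a).

Definition densely_defined (q : R) (D : coeffs -> Prop) : Prop :=
  (forall f, D f -> inML2 q f) /\
  (forall f, inML2 q f -> forall eps, 0 < eps ->
     exists g, D g /\ normML2 q (fun n => Cminus (f n) (g n)) < eps).

(** Self-adjointness: densely defined, symmetric, and the adjoint's domain is
    contained in D with T^* = T there (i.e. D = Dom(T adjoint), T = T adjoint). *)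
Definition self_adjoint (q : R) (D : coeffs -> Prop) (T : coeffs -> coeffs) : Prop :=
  densely_defined q D /\
  (forall g, D g -> inML2 q (T g)) /\
  (forall f g, D f -> D g -> ipML2 q g (T f) = ipML2 q (T g) f) /\
  (forall g h, inML2 q g -> inML2 q h ->
     (forall f, D f -> ipML2 q g (T f) = ipML2 q h f) -> D g /\ h = T g).

Definition positive_op (q : R) (D : coeffs -> Prop) (T : coeffs -> coeffs) : Prop :=
  forall f, D f -> Im (ipML2 q f (T f)) = 0 /\ 0 <= Re (ipML2 q f (T f)).

Definition combo (q : R) (N : nat) (c : nat -> C) : coeffs :=
  fun m => sum_n (fun k => Cmult (c k) (ket q k m)) N.

Definition eig (q : R) (n : nat) : R :=
  match n with O => 0 | S _ => lam q n end.

(** The operator defined on the span by these relations, taken on its maximal domain: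
    f = sum a_n z^(qn)  |->  sum eig(n) a_n z^(qn), whenever both lie in ML^2. *)
Definition Tmax (q : R) (a : coeffs) : coeffs := fun n => Cmult (RtoC (eig q n)) (a n).
Definition Dmax (q : R) (a : coeffs) : Prop := inML2 q a /\ inML2 q (Tmax q a).

(* In coefficients, [f = sum a_n z^(qn)], the creation operator is the shift and the
   annihilation operator shifts back after multiplying by
   [lam n = Gamma(qn+1) / Gamma(q(n-1)+1)], so a^dagger a is the diagonal operator
   [a_n |-> eig n * a_n] with [eig 0 = 0] and [eig n = lam n >= 0] otherwise.
   A nonnegative diagonal operator on a weighted l^2 space with positive weights is
   positive and self-adjoint on its maximal domain: finitely supported sequences are
   dense, symmetry holds termwise, and testing the adjoint relation against the basis
   vectors pins down every coefficient.
   The only analytic input is [Gamma x >= exp (-2)] for [x >= 1]: the Gamma integral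
   converges because its integrand is at most [exp (2 (x-1)^2) exp (-t/2)], and it is
   at least the integral over [1, 2].  This makes the weights positive, and it also
   gives the Caputo condition, which carries no weight, from the weighted one. *)

From Stdlib Require Import Reals.
From Coquelicot Require Import Coquelicot.
From Stdlib Require Import Lra Lia Classical FunctionalExtensionality.
Open Scope R_scope.

(** * A lower bound for the Gamma function *)

Lemma is_lub_approx (E : R -> Prop) (l eps : R) :
  is_lub E l -> 0 < eps -> exists y, E y /\ l - eps < y.
Proof.
  intros [Hub Hleast] Heps. apply NNPP; intros Hnone.
  assert (Hub' : is_upper_bound E (l - eps)).
  { intros y Hy. apply Rnot_lt_le. intros Hlt. apply Hnone. eauto. }
  specialize (Hleast _ Hub'). lra.
Qed.

Section NonnegImproperIntegral.

Variable f : R -> R.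
Hypothesis f_nonneg : forall t, 0 < t -> 0 <= f t.
Hypothesis f_int : forall a b, 0 < a -> 0 < b -> ex_RInt f a b.

Lemma RInt_le_subinterval (a b a0 b0 : R) :
  0 < a <= a0 -> a0 <= b0 <= b -> RInt f a0 b0 <= RInt f a b.
Proof.
  intros Ha Hb.
  assert (Hnonneg : forall u v, 0 < u <= v -> 0 <= RInt f u v).
  { intros u v Huv. apply RInt_ge_0; [lra | apply f_int; lra |].
    intros t Ht. apply f_nonneg. lra. }
  rewrite <- (RInt_Chasles f a a0 b), <- (RInt_Chasles f a0 b0 b) by (apply f_int; lra).
  pose proof (Hnonneg a a0). pose proof (Hnonneg b0 b).
  unfold plus; simpl. lra.
Qed.

Lemma is_RInt_gen_nonneg_bounded (M : R) :
  (forall a b, 0 < a <= b -> RInt f a b <= M) ->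
  exists l, is_RInt_gen f (at_right 0) (Rbar_locally p_infty) l /\
            (forall a b, 0 < a <= b -> RInt f a b <= l).
Proof.
  intros HM.
  (* The limit is the supremum of the proper integrals, which grow with the interval. *)
  set (E := fun y => exists a b, 0 < a <= b /\ y = RInt f a b).
  assert (HE : exists y, E y) by (exists (RInt f 1 1), 1, 1; split; [lra | reflexivity]).
  assert (HEb : bound E) by (exists M; intros y (a & b & Hab & ->); auto).
  destruct (completeness E HEb HE) as [l Hl].
  exists l. split; [| intros a b Hab; apply (proj1 Hl); exists a, b; auto].
  apply filterlimi_lim_ext_loc with (f := fun ab => RInt f (fst ab) (snd ab)).
  - exists (fun a => 0 < a) (fun b => 0 < b).
    + exists (mkposreal 1 Rlt_0_1). intros; auto.
    + exists 0. auto.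
    + intros a b Ha Hb. apply (RInt_correct (V := R_CompleteNormedModule)), f_int; auto.
  - apply filterlim_locally. intros eps.
    destruct (is_lub_approx E l eps Hl (cond_pos eps)) as (y & (a0 & b0 & Hab0 & ->) & Hy).
    exists (fun a => 0 < a <= a0) (fun b => b0 < b).
    + exists (mkposreal a0 (proj1 Hab0)). intros a Ha Hpos. split; auto.
      unfold ball in Ha; simpl in Ha; unfold AbsRing_ball, abs, minus, plus, opp in Ha; simpl in Ha.
      apply Rabs_def2 in Ha. lra.
    + exists b0. auto.
    + intros a b Ha Hb. simpl.
      pose proof (RInt_le_subinterval a b a0 b0 Ha (conj (proj2 Hab0) (Rlt_le _ _ Hb))).
      assert (RInt f a b <= l) by (apply (proj1 Hl); exists a, b; split; [lra | auto]).
      unfold ball; simpl; unfold AbsRing_ball, abs, minus, plus, opp; simpl.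
      apply Rabs_def1; lra.
Qed.

End NonnegImproperIntegral.

Lemma exp_le_exp (x y : R) : x <= y -> exp x <= exp y.
Proof. intros [Hlt | ->]; [left; apply exp_increasing | right]; auto. Qed.

Definition gamma_integrand (x t : R) : R := Rpower t (x - 1) * exp (- t).

Lemma gamma_integrand_nonneg (x t : R) : 0 <= gamma_integrand x t.
Proof. apply Rmult_le_pos; left; [apply exp_pos | apply exp_pos]. Qed.

Lemma ex_RInt_gamma_integrand (x a b : R) :
  0 < a -> 0 < b -> ex_RInt (gamma_integrand x) a b.
Proof.
  intros Ha Hb. apply (ex_RInt_continuous (V := R_CompleteNormedModule)).
  intros t Ht. apply (ex_derive_continuous (V := R_NormedModule)).
  unfold gamma_integrand, Rpower. auto_derive.
  assert (0 < Rmin a b) by (apply Rmin_glb_lt; auto). lra.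
Qed.

(* From [ln t <= 2 sqrt t] and [2 (x-1) sqrt t <= t/2 + 2 (x-1)^2]. *)
Lemma gamma_integrand_le (x t : R) :
  1 <= x -> 0 < t -> gamma_integrand x t <= exp (2 * (x - 1) ^ 2) * exp (- t / 2).
Proof.
  intros Hx Ht. unfold gamma_integrand, Rpower. rewrite <- !exp_plus.
  apply exp_le_exp.
  assert (Hs : 0 < sqrt t) by (apply sqrt_lt_R0; auto).
  assert (Hln : ln t <= 2 * sqrt t).
  { rewrite <- (sqrt_sqrt t) at 1 by lra. rewrite ln_mult by auto.
    pose proof (exp_ineq1_le (ln (sqrt t))) as Hexp. rewrite exp_ln in Hexp by auto. lra. }
  pose proof (sqrt_sqrt t (Rlt_le _ _ Ht)).
  assert ((x - 1) * ln t <= (x - 1) * (2 * sqrt t)) by (apply Rmult_le_compat_l; lra).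
  pose proof (pow2_ge_0 (sqrt t - 2 * (x - 1))). nra.
Qed.

Lemma gamma_integrand_ge (x t : R) : 1 <= x -> 1 <= t <= 2 -> exp (-2) <= gamma_integrand x t.
Proof.
  intros Hx Ht. unfold gamma_integrand.
  assert (1 <= Rpower t (x - 1)).
  { apply Rle_trans with (Rpower t 0); [rewrite Rpower_O by lra; lra | apply Rle_Rpower; lra]. }
  assert (exp (-2) <= exp (- t)) by (apply exp_le_exp; lra).
  pose proof (exp_pos (-2)). nra.
Qed.

Lemma RInt_gamma_integrand_le (x a b : R) :
  1 <= x -> 0 < a <= b -> RInt (gamma_integrand x) a b <= 2 * exp (2 * (x - 1) ^ 2).
Proof.
  intros Hx Hab. set (K := exp (2 * (x - 1) ^ 2)).
  set (g := fun t => K * exp (- t / 2)).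
  set (G := fun t => -2 * K * exp (- t / 2)).
  assert (Hg : is_RInt g a b (G b - G a)).
  { apply (is_RInt_derive (V := R_CompleteNormedModule)).
    - intros t _. unfold G, g. auto_derive; [auto | unfold Rdiv; field].
    - intros t _. apply (ex_derive_continuous (V := R_NormedModule)). unfold g. auto_derive. auto. }
  apply Rle_trans with (G b - G a).
  - apply (is_RInt_le (gamma_integrand x) g a b); [lra | | exact Hg |].
    + apply (RInt_correct (V := R_CompleteNormedModule)), ex_RInt_gamma_integrand; lra.
    + intros t Ht. apply gamma_integrand_le; lra.
  - unfold G. pose proof (exp_pos (- b / 2)). assert (0 < K) by apply exp_pos.
    assert (exp (- a / 2) <= 1) by (rewrite <- exp_0; apply exp_le_exp; lra). nra.
Qed.

Lemma Gamma_ge (x : R) : 1 <= x -> exp (-2) <= Gamma x.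
Proof.
  intros Hx.
  destruct (is_RInt_gen_nonneg_bounded (gamma_integrand x)
              (fun t _ => gamma_integrand_nonneg x t) (ex_RInt_gamma_integrand x)
              _ (fun a b => RInt_gamma_integrand_le x a b Hx)) as (l & Hl & Hsup).
  change (exp (-2) <= RInt_gen (gamma_integrand x) (at_right 0) (Rbar_locally p_infty)).
  rewrite (is_RInt_gen_unique _ _ Hl).
  apply Rle_trans with (RInt (gamma_integrand x) 1 2); [| apply Hsup; lra].
  apply Rle_trans with (RInt (fun _ => exp (-2)) 1 2).
  - rewrite RInt_const. unfold scal; simpl; unfold mult; simpl. lra.
  - apply RInt_le; [lra | apply ex_RInt_const | apply ex_RInt_gamma_integrand; lra |].
    intros t Ht. apply gamma_integrand_ge; lra.
Qed.

Lemma wq_ge (q : R) (n : nat) : 0 < q -> exp (-2) <= wq q n.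
Proof. intros Hq. apply Gamma_ge. pose proof (pos_INR n). nra. Qed.

Lemma wq_pos (q : R) (n : nat) : 0 < q -> 0 < wq q n.
Proof. intros Hq. apply Rlt_le_trans with (exp (-2)); [apply exp_pos | apply wq_ge; auto]. Qed.

Lemma eig_nonneg (q : R) (n : nat) : 0 < q -> 0 <= eig q n.
Proof.
  intros Hq. destruct n as [|n]; simpl; [lra |].
  apply Rlt_le, Rdiv_lt_0_compat; apply wq_pos; auto.
Qed.

Lemma is_series_finite_support (a : nat -> R) (N : nat) :
  (forall m, (N < m)%nat -> a m = 0) -> is_series a (sum_n a N).
Proof.
  intros Ha. apply (filterlim_ext_loc (fun _ => sum_n a N)); [| apply filterlim_const].
  exists N. intros n Hn. induction Hn as [| n Hn IH]; [reflexivity |].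
  rewrite sum_Sn, <- IH, Ha by lia. unfold plus; simpl. symmetry. apply Rplus_0_r.
Qed.

Lemma Series_single (a : nat -> R) (k : nat) :
  (forall m, m <> k -> a m = 0) -> Series a = a k.
Proof.
  intros Ha.
  rewrite (is_series_unique _ _ (is_series_finite_support a k (fun m Hm => Ha m ltac:(lia)))).
  destruct k as [|k]; [apply sum_O |].
  rewrite sum_Sn, (sum_n_ext_loc _ (fun _ => 0)), sum_n_const by (intros; apply Ha; lia).
  unfold plus; simpl. ring.
Qed.

Lemma Series_nonneg (a : nat -> R) : (forall n, 0 <= a n) -> ex_series a -> 0 <= Series a.
Proof.
  intros Ha Hex. rewrite <- (Series_single (fun _ => 0) 0) by auto.
  apply Series_le; [intros n; split; [apply Rle_refl | apply Ha] | exact Hex].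
Qed.

Lemma ex_series_nonneg_le (a b : nat -> R) :
  (forall n, 0 <= a n <= b n) -> ex_series b -> ex_series a.
Proof.
  intros Hab. apply (ex_series_le (K := R_AbsRing) (V := R_CompleteNormedModule)).
  intros n. unfold norm; simpl; unfold abs; simpl.
  rewrite Rabs_pos_eq; apply Hab.
Qed.

Lemma Series_tail_lt (a : nat -> R) (eps : R) :
  ex_series a -> 0 < eps -> exists N, Series (fun k => a (S N + k)%nat) < eps.
Proof.
  intros Ha Heps.
  destruct (proj1 (filterlim_locally _ _) (Series_correct _ Ha) (mkposreal _ Heps)) as [N HN].
  exists N. specialize (HN N (le_n N)).
  change (Rabs (sum_n a N - Series a) < eps) in HN.
  rewrite (Series_incr_n a (S N)), <- sum_n_Reals in HN by (auto; lia).
  change (Init.Nat.pred (S N)) with N in HN. apply Rabs_def2 in HN. lra.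
Qed.

(** * The operator in coefficients *)

Lemma ket_neq (q : R) (n m : nat) : m <> n -> ket q n m = RtoC 0.
Proof. intros Hmn. unfold ket. apply Nat.eqb_neq in Hmn. rewrite Hmn. reflexivity. Qed.

Lemma adag_a_Tmax (q : R) (f : coeffs) : adag_a q f = Tmax q f.
Proof.
  apply functional_extensionality; intros [|n]; unfold adag_a, adag, caputo, Tmax, eig.
  - symmetry. apply Cmult_0_l.
  - apply Cmult_comm.
Qed.

Lemma Tmax_ket (q : R) (n : nat) :
  Tmax q (ket q n) = fun m => Cmult (RtoC (eig q n)) (ket q n m).
Proof.
  apply functional_extensionality; intros m. unfold Tmax.
  destruct (Nat.eq_dec m n) as [-> | Hmn]; [reflexivity |].
  rewrite ket_neq by auto. rewrite !Cmult_0_r. reflexivity.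
Qed.

Lemma Cmod_Tmax (q : R) (f : coeffs) (n : nat) :
  Cmod (Tmax q f n) ^ 2 = eig q n ^ 2 * Cmod (f n) ^ 2.
Proof. unfold Tmax. rewrite Cmod_mult, Cmod_R, Rpow_mult_distr, pow2_abs. reflexivity. Qed.

Lemma Dmax_finite_support (q : R) (f : coeffs) (N : nat) :
  (forall m, (N < m)%nat -> f m = RtoC 0) -> Dmax q f.
Proof.
  intros Hf. split; eexists; apply (is_series_finite_support _ N); intros m Hm.
  - rewrite Hf, Cmod_0 by auto. ring.
  - rewrite Cmod_Tmax, Hf, Cmod_0 by auto. ring.
Qed.

Lemma combo_support (q : R) (N : nat) (c : nat -> C) (m : nat) :
  (N < m)%nat -> combo q N c m = RtoC 0.
Proof.
  intros Hm. unfold combo.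
  rewrite (sum_n_ext_loc _ (fun k => mult (RtoC 0) (c k))), sum_n_mult_l; [apply Cmult_0_l |].
  intros k Hk. rewrite ket_neq by lia. rewrite Cmult_0_r. symmetry. apply Cmult_0_l.
Qed.

Lemma Tmax_combo (q : R) (N : nat) (c : nat -> C) :
  Tmax q (combo q N c) = combo q N (fun k => Cmult (c k) (RtoC (eig q k))).
Proof.
  apply functional_extensionality; intros m. unfold Tmax, combo.
  rewrite <- (sum_n_mult_l (K := C_Ring)). apply sum_n_ext; intros k.
  destruct (Nat.eq_dec k m) as [-> | Hkm].
  - unfold mult; simpl. ring.
  - rewrite ket_neq by auto. unfold mult; simpl. rewrite !Cmult_0_r. reflexivity.
Qed.

Definition truncate (N : nat) (f : coeffs) : coeffs :=
  fun n => if (n <=? N)%nat then f n else RtoC 0.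

Section DiagonalOperator.

Variable q : R.
Hypothesis q_pos : 0 < q.

Lemma Cmod_sqr_wq_nonneg (z : C) (n : nat) : 0 <= Cmod z ^ 2 * wq q n.
Proof. apply Rmult_le_pos; [apply pow2_ge_0 | apply Rlt_le, wq_pos; auto]. Qed.

(* [e <= 1 + e^2] bounds the quadratic form by the graph norm. *)
Lemma ex_series_Tmax_form (f : coeffs) :
  Dmax q f -> ex_series (fun n => eig q n * (Cmod (f n) ^ 2 * wq q n)).
Proof.
  intros [Hf HTf].
  apply (ex_series_nonneg_le _
           (fun n => Cmod (f n) ^ 2 * wq q n + Cmod (Tmax q f n) ^ 2 * wq q n));
    [| exact (ex_series_plus _ _ Hf HTf)].
  intros n. rewrite Cmod_Tmax.
  pose proof (eig_nonneg q n q_pos). pose proof (Cmod_sqr_wq_nonneg (f n) n).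
  assert (eig q n <= 1 + eig q n ^ 2) by nra.
  split; nra.
Qed.

(* Since [lam (S n) * wq q n = wq q (S n)], the norm of [caputo q f] is the shifted
   quadratic form of [Tmax q f]. *)
Lemma inML2_caputo (f : coeffs) : Dmax q f -> inML2 q (caputo q f).
Proof.
  intros Hf.
  assert (Hterm : forall n, eig q (S n) * (Cmod (f (S n)) ^ 2 * wq q (S n))
                            = Cmod (caputo q f n) ^ 2 * wq q n).
  { intros n. unfold caputo, eig, lam. simpl Nat.sub. rewrite Nat.sub_0_r.
    rewrite Cmod_mult, Cmod_R, Rpow_mult_distr, pow2_abs.
    pose proof (wq_pos q n q_pos). field. lra. }
  apply (ex_series_ext _ _ Hterm).
  apply (ex_series_incr_1 (fun n => eig q n * (Cmod (f n) ^ 2 * wq q n))).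
  apply ex_series_Tmax_form; auto.
Qed.

(* The condition carries no weight, so the lower bound [exp (-2) <= wq q n] is needed. *)
Lemma caputo_defined_of_Dmax (f : coeffs) : Dmax q f -> caputo_defined q f.
Proof.
  intros [_ HTf]. unfold caputo_defined.
  apply (ex_series_nonneg_le _ (fun n => exp 2 * (Cmod (Tmax q f (S n)) ^ 2 * wq q (S n))));
    [| exact (ex_series_scal (exp 2) _ (proj1 (ex_series_incr_1 _) HTf))].
  intros n. rewrite Cmod_Tmax, pow2_abs. change (eig q (S n)) with (lam q (S n)).
  pose proof (wq_ge q (S n) q_pos).
  assert (Hx : 0 <= Cmod (f (S n)) ^ 2 * lam q (S n) ^ 2)
    by (apply Rmult_le_pos; apply pow2_ge_0).
  assert (Hw : 1 <= exp 2 * wq q (S n)).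
  { rewrite <- (exp_0), <- (Rplus_opp_r 2), exp_plus.
    apply Rmult_le_compat_l; [apply Rlt_le, exp_pos | auto]. }
  split; nra.
Qed.

Lemma dom_adag_a_iff_Dmax (f : coeffs) : dom_adag_a q f <-> Dmax q f.
Proof.
  unfold dom_adag_a, dom_a, dom_adag. fold (adag_a q f). rewrite adag_a_Tmax.
  split.
  - intros [[Hf _] [_ HTf]]. split; auto.
  - intros HDf. pose proof HDf as [Hf HTf].
    repeat split; auto using inML2_caputo, caputo_defined_of_Dmax.
Qed.

Lemma ipML2_Tmax_sym (f g : coeffs) : ipML2 q g (Tmax q f) = ipML2 q (Tmax q g) f.
Proof.
  unfold ipML2, Tmax. f_equal; apply Series_ext; intros n;
    destruct (f n), (g n); simpl; ring.
Qed.

Lemma ipML2_Tmax_diag (f : coeffs) :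
  ipML2 q f (Tmax q f) = RtoC (Series (fun n => eig q n * (Cmod (f n) ^ 2 * wq q n))).
Proof.
  assert (Hconj : forall n, Cmult (Cconj (f n)) (Tmax q f n) = RtoC (eig q n * Cmod (f n) ^ 2)).
  { intros n. unfold Tmax. rewrite RtoC_mult, Cmod2_conj. ring. }
  unfold ipML2, RtoC. f_equal.
  - apply Series_ext; intros n. rewrite Hconj. simpl. ring.
  - rewrite (Series_ext _ (fun _ => 0)) by (intros n; rewrite Hconj; simpl; ring).
    apply (Series_single (fun _ => 0) 0); auto.
Qed.

Lemma Tmax_positive : positive_op q (Dmax q) (Tmax q).
Proof.
  intros f Hf. rewrite ipML2_Tmax_diag. split; [reflexivity |].
  apply Series_nonneg; [| apply ex_series_Tmax_form; auto].
  intros n. apply Rmult_le_pos; [apply eig_nonneg | apply Cmod_sqr_wq_nonneg]; auto.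
Qed.

Lemma ipML2_single_support (g b : coeffs) (k : nat) :
  (forall m, m <> k -> b m = RtoC 0) ->
  ipML2 q g b = Cmult (RtoC (wq q k)) (Cmult (Cconj (g k)) (b k)).
Proof.
  intros Hb. unfold ipML2.
  rewrite !(Series_single _ k) by (intros m Hm; rewrite Hb by auto; destruct (g m); simpl; ring).
  destruct (g k), (b k). unfold Cmult, RtoC; simpl. f_equal; ring.
Qed.

(* Testing against the basis vector [ket q k] forces the k-th coefficient. *)
Lemma Tmax_maximal (g h : coeffs) :
  inML2 q g -> inML2 q h ->
  (forall f, Dmax q f -> ipML2 q g (Tmax q f) = ipML2 q h f) -> Dmax q g /\ h = Tmax q g.
Proof.
  intros Hg Hh Hadj.
  enough (Hgh : h = Tmax q g) by (split; [split; [| rewrite <- Hgh] |]; auto).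
  apply functional_extensionality; intros k.
  assert (Hket : forall m, m <> k -> ket q k m = RtoC 0) by apply ket_neq.
  specialize (Hadj (ket q k) (Dmax_finite_support q _ k (fun m Hm => Hket m ltac:(lia)))).
  rewrite Tmax_ket in Hadj.
  rewrite (ipML2_single_support g _ k) in Hadj
    by (intros m Hm; rewrite Hket by auto; apply Cmult_0_r).
  rewrite (ipML2_single_support h _ k) in Hadj by exact Hket.
  assert (Hw : RtoC (wq q k) <> RtoC 0)
    by (intros Hw; apply (f_equal fst) in Hw; simpl in Hw; pose proof (wq_pos q k q_pos); lra).
  unfold Tmax. set (c := ket q k k) in *. set (w := wq q k) in *.
  assert (Hc : c <> RtoC 0).
  { intros Hc. apply (f_equal fst) in Hc. unfold c, ket in Hc. rewrite Nat.eqb_refl in Hc.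
    simpl in Hc. revert Hc. apply Rinv_neq_0_compat, Rgt_not_eq, sqrt_lt_R0, wq_pos; auto. }
  assert (Hconj : Cconj (h k) = Cmult (RtoC (eig q k)) (Cconj (g k))).
  { transitivity (Cdiv (Cmult (RtoC w) (Cmult (Cconj (h k)) c)) (Cmult (RtoC w) c));
      [field; auto |].
    rewrite <- Hadj. field; auto. }
  rewrite <- (Cconj_conj (h k)), Hconj, Cmult_conj, Cconj_conj.
  f_equal. unfold Cconj, RtoC; simpl. f_equal. ring.
Qed.

Lemma Dmax_dense : densely_defined q (Dmax q).
Proof.
  split; [intros f [Hf _]; exact Hf |].
  intros f Hf eps Heps.
  set (A := fun n => Cmod (f n) ^ 2 * wq q n).
  destruct (Series_tail_lt A (eps ^ 2) Hf (pow_lt _ _ Heps)) as [N HN].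
  exists (truncate N f). split.
  - apply (Dmax_finite_support _ _ N). intros m Hm. unfold truncate.
    destruct (Nat.leb_spec m N); [lia | reflexivity].
  - assert (Htail : Series (fun n => Cmod (Cminus (f n) (truncate N f n)) ^ 2 * wq q n)
                    = Series (fun k => A (S N + k)%nat)).
    { rewrite (Series_incr_n_aux _ (S N)).
      - apply Series_ext; intros k. unfold A, truncate.
        destruct (Nat.leb_spec (S N + k) N); [lia |]. do 3 f_equal. ring.
      - intros k Hk. unfold truncate. destruct (Nat.leb_spec k N); [| lia].
        replace (Cminus (f k) (f k)) with (RtoC 0) by ring. rewrite Cmod_0. ring. }
    unfold normML2. rewrite Htail, <- (sqrt_pow2 eps) by lra.
    apply sqrt_lt_1_alt. split; auto.
    apply Series_nonneg; [intros k; apply Cmod_sqr_wq_nonneg |].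
    apply (ex_series_incr_n A (S N)), Hf.
Qed.

Lemma Tmax_self_adjoint : self_adjoint q (Dmax q) (Tmax q).
Proof.
  split; [exact Dmax_dense |]. split; [intros g [_ HTg]; exact HTg |].
  split; [intros f g _ _; apply ipML2_Tmax_sym |].
  exact Tmax_maximal.
Qed.

End DiagonalOperator.

Theorem mainTheorem3 (q : R) (hq : 0 < q) :
  (* 1. each |n_q> lies in Dom(a^dagger a) *)
  (forall n : nat, dom_adag_a q (ket q n)) /\
  (* 2. eigenvalue relations *)
  (forall n : nat,
     adag_a q (ket q n) =
     match n with
     | O => fun _ => RtoC 0
     | S _ => fun m => Cmult (RtoC (wq q n / wq q (n - 1))) (ket q n m)
     end) /\
  (* 3. the operator defined on span{|n_q>} by these relations extends to a positive
        self-adjoint operator on its maximal domain, which is a^dagger a *)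
  ((forall (N : nat) (c : nat -> C),
      Dmax q (combo q N c) /\
      Tmax q (combo q N c) = combo q N (fun k => Cmult (c k) (RtoC (eig q k)))) /\
   self_adjoint q (Dmax q) (Tmax q) /\
   positive_op q (Dmax q) (Tmax q) /\
   (forall f, dom_adag_a q f <-> Dmax q f) /\
   (forall f, dom_adag_a q f -> adag_a q f = Tmax q f)) /\
  (* 4. formula for a^dagger a on its domain:
        (a^dagger a f)(z) = sum_{n>=1} a_n Gamma(qn+1)/Gamma(q(n-1)+1) z^(qn) *)
  (forall f : coeffs, inML2 q f -> dom_adag_a q f ->
     adag_a q f = fun n => match n with
                           | O => RtoC 0
                           | S _ => Cmult (f n) (RtoC (wq q n / wq q (n - 1)))
                           end).
Proof.
  split; [| split; [| split; [split; [| split; [| split; [| split]]] |]]].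
  - intros n. apply dom_adag_a_iff_Dmax, (Dmax_finite_support q _ n); auto.
    intros m Hm. apply ket_neq. lia.
  - intros n. rewrite adag_a_Tmax, Tmax_ket.
    destruct n as [|n]; [| reflexivity].
    apply functional_extensionality; intros m. apply Cmult_0_l.
  - intros N c. split; [| apply Tmax_combo].
    apply (Dmax_finite_support q _ N). intros m Hm. apply combo_support; auto.
  - apply Tmax_self_adjoint; auto.
  - apply Tmax_positive; auto.
  - apply dom_adag_a_iff_Dmax; auto.
  - intros f _. apply adag_a_Tmax.
  - intros f _ _. apply functional_extensionality; intros [|m]; reflexivity.
Qed.
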